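(* Let $n$ be a positive integer and let $x$ be a complex number such that no denominator below vanishes. Then \[ \sum_{k=0}^{n}(-1)^k\binom{n}{k}\frac{\binom{2x+k}{k}}{\binom{2x+n+k}{k}}H_{k}(x) =4^{n-1}\frac{\binom{n-\frac{1}{2}}{n}}{\binom{2x+2n}{n}}\big\{H_n(x)+H_n-2H_{2n}\big\} -\frac{4^{n-1}}{n}\frac{\binom{x+n-\frac{1}{2}}{n}}{\binom{2x+2n}{n}\binom{x+n}{n}}. \]
   Context: For complex $z$ and a nonnegative integer $k$, $\binom{z}{k}=\frac{z(z-1)\cdots(z-k+1)}{k!}$ (with $\binom{z}{0}=1$). For complex $x$ and nonnegative integer $m$, $H_0(x)=0$ and $H_m(x)=\sum_{j=1}^m\frac{1}{x+j}$; $H_m=H_m(0)=\sum_{j=1}^m\frac1j$. The parameter $x$ is assumed to be such that all denominators are nonzero. *)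

From HB Require Import structures.
From mathcomp Require Import all_boot all_order all_algebra.
From mathcomp Require Import reals complex.
Set Implicit Arguments. Unset Strict Implicit. Unset Printing Implicit Defensive.
Import Order.TTheory GRing.Theory Num.Theory.
Local Open Scope ring_scope.

Definition binom {F : fieldType} (z : F) (k : nat) : F :=
  (\prod_(i < k) (z - i%:R)) / (k`!)%:R.

Definition Hx {F : fieldType} (m : nat) (x : F) : F :=
  \sum_(1 <= j < m.+1) (x + j%:R)^-1.

Definition Hn {F : fieldType} (m : nat) : F := Hx m 0.

From HB Require Import structures.
From mathcomp Require Import all_boot all_order all_algebra.
From mathcomp Require Import reals complex.
From mathcomp Require Import ring.
Set Implicit Arguments. Unset Strict Implicit. Unset Printing Implicit Defensive.
Import Order.TTheory GRing.Theory Num.Theory.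
Local Open Scope ring_scope.

(* For real x > 0 let T_n(k) be the summand without H_k(x).  By creative
   telescoping, with explicit rational certificates, the sums
   s_n = sum_k T_n(k),  w_n = sum_k T_n(k) k/(x+k)  and  h_n = sum_k T_n(k) H_k(x)
   satisfy first-order recurrences in n; the one for h_n is inhomogeneous in
   s_(n+1) and w_(n+1), which enter through H_(k+1)(x) = H_k(x) + 1/(x+k+1).
   Solving them gives s_n = 2 A_n, w_n = -2n B_n and the stated identity for
   h_n = A_n (H_n(x) + H_n - 2 H_2n) - B_n by induction on n; positivity of x
   keeps every denominator along the way nonzero.  Multiplied by a common
   denominator, the difference of the two sides is a polynomial in x vanishing
   at all positive integers, so the identity holds at every admissible x. *)

Section RationalOn.
Variables (C : fieldType) (D : C -> Prop).

Definition rational_on (f : C -> C) :=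
  exists d p : {poly C}, forall z, D z -> d.[z] != 0 /\ f z * d.[z] = p.[z].

Lemma rational_ext f g : rational_on f -> f =1 g -> rational_on g.
Proof. by move=> [d [p hf]] fg; exists d, p => z /hf; rewrite fg. Qed.

Lemma rational_const c : rational_on (fun _ => c).
Proof. by exists 1, c%:P => z _; rewrite !hornerE oner_neq0 ?mulr1. Qed.

Lemma rational_id : rational_on id.
Proof. by exists 1, 'X => z _; rewrite !hornerE oner_neq0 ?mulr1. Qed.

Lemma rational_add f g :
  rational_on f -> rational_on g -> rational_on (fun z => f z + g z).
Proof.
move=> [df [pf hf]] [dg [pg hg]]; exists (df * dg), (pf * dg + pg * df) => z Dz.
have [df0 ef] := hf z Dz; have [dg0 eg] := hg z Dz.
by rewrite hornerD !hornerM mulf_neq0 // -ef -eg; split=> //; ring.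
Qed.

Lemma rational_mul f g :
  rational_on f -> rational_on g -> rational_on (fun z => f z * g z).
Proof.
move=> [df [pf hf]] [dg [pg hg]]; exists (df * dg), (pf * pg) => z Dz.
have [df0 ef] := hf z Dz; have [dg0 eg] := hg z Dz.
by rewrite !hornerM mulf_neq0 // -ef -eg; split=> //; ring.
Qed.

Lemma rational_opp f : rational_on f -> rational_on (fun z => - f z).
Proof.
move=> rf; apply: rational_ext (rational_mul (rational_const (-1)) rf) _ => z.
by rewrite mulN1r.
Qed.

Lemma rational_inv f : rational_on f -> (forall z, D z -> f z != 0) ->
  rational_on (fun z => (f z)^-1).
Proof.
move=> [d [p hf]] f0; exists p, d => z Dz; have [d0 <-] := hf z Dz.
by rewrite mulf_neq0 ?f0 // mulrA mulVf ?f0 ?mul1r.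
Qed.

Lemma rational_sum (I : eqType) (r : seq I) (P : pred I) (F : I -> C -> C) :
    (forall i, i \in r -> P i -> rational_on (F i)) ->
  rational_on (fun z => \sum_(i <- r | P i) F i z).
Proof.
elim: r => [|a r IH] rF.
  by apply: rational_ext (rational_const 0) _ => z; rewrite big_nil.
have {}IH : rational_on (fun z => \sum_(i <- r | P i) F i z).
  by apply: IH => i ir; apply: rF; rewrite inE ir orbT.
apply: rational_ext (_ : rational_on (fun z =>
  if P a then F a z + \sum_(i <- r | P i) F i z else \sum_(i <- r | P i) F i z)) _.
  by case: (P a) (rF a (mem_head a r)) => // ra; apply: rational_add; auto.
by move=> z; rewrite big_cons.
Qed.

Lemma rational_prod (I : eqType) (r : seq I) (P : pred I) (F : I -> C -> C) :
    (forall i, i \in r -> P i -> rational_on (F i)) ->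
  rational_on (fun z => \prod_(i <- r | P i) F i z).
Proof.
elim: r => [|a r IH] rF.
  by apply: rational_ext (rational_const 1) _ => z; rewrite big_nil.
have {}IH : rational_on (fun z => \prod_(i <- r | P i) F i z).
  by apply: IH => i ir; apply: rF; rewrite inE ir orbT.
apply: rational_ext (_ : rational_on (fun z =>
  if P a then F a z * \prod_(i <- r | P i) F i z else \prod_(i <- r | P i) F i z)) _.
  by case: (P a) (rF a (mem_head a r)) => // ra; apply: rational_mul; auto.
by move=> z; rewrite big_cons.
Qed.

Lemma rational_binom f k : rational_on f -> rational_on (fun z => binom (f z) k).
Proof.
move=> rf; apply: rational_mul; last exact: rational_const.
apply: rational_prod => i _ _; apply: rational_add => //.
exact: rational_const.
Qed.

Lemma rational_Hx k : (forall z, D z -> forall j, (1 <= j <= k)%N -> z + j%:R != 0) ->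
  rational_on (Hx k).
Proof.
move=> z_neq0; apply: rational_sum => j /[!mem_index_iota] jk _.
apply: rational_inv => [|z Dz]; last exact: z_neq0.
by apply: rational_add; [exact: rational_id | exact: rational_const].
Qed.

Lemma rational_on_eq0 f (u : nat -> C) : rational_on f -> injective u ->
  (forall N, D (u N)) -> (forall N, f (u N) = 0) -> forall z, D z -> f z = 0.
Proof.
move=> [d [p hf]] u_inj Du fu0.
have p0 : p = 0.
  apply: (@roots_geq_poly_eq0 _ p [seq u N | N <- iota 0 (size p)]).
  - apply/allP => _ /mapP[N _ ->]; rewrite /root.
    by have [_ <-] := hf _ (Du N); rewrite fu0 mul0r.
  - by rewrite map_inj_uniq ?iota_uniq.
  - by rewrite size_map size_iota.
move=> z Dz; have [d0] := hf z Dz; rewrite p0 horner0 => /eqP.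
by rewrite mulf_eq0 (negPf d0) orbF => /eqP.
Qed.

End RationalOn.

Lemma sum_telescope_rec (V : pzRingType) N c (a b e g : nat -> V) :
    (forall k, a k - c * b k = g k.+1 - g k + e k) -> g 0%N = 0 -> g N = 0 ->
  \sum_(k < N) a k = c * \sum_(k < N) b k + \sum_(k < N) e k.
Proof.
move=> abe g0 gN; have : \sum_(k < N) (a k - c * b k) = \sum_(k < N) e k.
  rewrite (eq_bigr _ (fun (k : 'I_N) _ => abe k)) big_split /=.
  rewrite -(big_mkord xpredT (fun k => g k.+1 - g k)) telescope_sumr //.
  by rewrite gN g0 subrr add0r.
by rewrite sumrB -mulr_sumr => <-; rewrite addrC subrK.
Qed.

Lemma sum_telescope_ratio (V : pzRingType) N c (a b g : nat -> V) :
    (forall k, a k - c * b k = g k.+1 - g k) -> g 0%N = 0 -> g N = 0 ->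
  \sum_(k < N) a k = c * \sum_(k < N) b k.
Proof.
move=> abg g0 gN; rewrite (@sum_telescope_rec _ _ c a b (fun=> 0) g) ?big1_eq ?addr0 //.
by move=> k; rewrite addr0.
Qed.

Lemma sum_ord_recr0 (V : nmodType) n (f : nat -> V) :
  f n = 0 -> \sum_(k < n.+1) f k = \sum_(k < n) f k.
Proof. by move=> fn0; rewrite big_ord_recr /= fn0 addr0. Qed.

Section Rising.
Variable R : comPzRingType.

Definition rising (a : R) k := \prod_(i < k) (a + i%:R).

Lemma rising0 a : rising a 0 = 1.
Proof. by rewrite /rising big_ord0. Qed.

Lemma risingS a k : rising a k.+1 = rising a k * (a + k%:R).
Proof. by rewrite /rising big_ord_recr. Qed.

Lemma risingSl a k : rising a k.+1 = a * rising (a + 1) k.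
Proof.
rewrite /rising big_ord_recl addr0; congr (_ * _); apply: eq_bigr => i _.
by rewrite lift0 -natr1 addrA addrAC.
Qed.

End Rising.

Section Binomial.
Context {F : numFieldType}.
Implicit Types (z : F) (k : nat).

Lemma natr_fact_neq0 k : k`!%:R != 0 :> F.
Proof. by rewrite pnatr_eq0 -lt0n fact_gt0. Qed.

Lemma binom0 z : binom z 0 = 1.
Proof. by rewrite /binom big_ord0 fact0 divr1. Qed.

Lemma binomSr z k : binom z k.+1 = binom z k * (z - k%:R) / k.+1%:R.
Proof. by rewrite /binom big_ord_recr factS natrM invfM /=; ring. Qed.

Lemma binomSl z k : binom z k.+1 = z / k.+1%:R * binom (z - 1) k.
Proof.
rewrite /binom big_ord_recl factS natrM invfM subr0.
rewrite (eq_bigr (fun i : 'I_k => z - 1 - i%:R)) => [|i _]; first by ring.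
by rewrite lift0 -natr1 opprD addrA addrAC.
Qed.

Lemma binom1 z : binom z 1 = z.
Proof. by rewrite binomSr binom0 subr0 mul1r divr1. Qed.

Lemma mul_binom_down z k : binom (z + 1) k * (z + 1 - k%:R) = (z + 1) * binom z k.
Proof.
have k1_neq0 : k.+1%:R != 0 :> F by rewrite pnatr_eq0.
have := binomSl (z + 1) k; rewrite binomSr addrK => e.
by rewrite -[LHS](divfK k1_neq0) e; field; rewrite addrC natr1.
Qed.

Lemma binom_nat n k : binom (n%:R : F) k = 'C(n, k)%:R.
Proof.
elim: n k => [|n IH] [|k]; rewrite ?binom0 ?bin0 //.
  by rewrite binomSl !mul0r.
rewrite binomSl -[n.+1%:R]natr1 addrK natr1 IH mulrAC -natrM.
by rewrite (mul_bin_diag n.+1 k) mulnC natrM mulfK // pnatr_eq0.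
Qed.

Lemma binom_rising z k : binom (z + k%:R) k = rising (z + 1) k / k`!%:R.
Proof.
elim: k => [|k IH]; first by rewrite binom0 rising0 fact0 divr1.
rewrite binomSl.
have -> : z + k.+1%:R - 1 = z + k%:R by rewrite -natr1 addrA addrK.
rewrite IH risingS factS natrM invfM -natr1; ring.
Qed.

Lemma binom_neq0 z k : (forall i, (i < k)%N -> z - i%:R != 0) -> binom z k != 0.
Proof.
move=> zi0; rewrite /binom mulf_neq0 ?invr_eq0 ?natr_fact_neq0 //.
by rewrite prodf_seq_neq0; apply/allP => i _; apply: zi0.
Qed.

Lemma binom_nat_neq0 n k : (k <= n)%N -> binom (n%:R : F) k != 0.
Proof. by rewrite binom_nat pnatr_eq0 -lt0n bin_gt0. Qed.

Lemma natr_binSr n k : ('C(n, k.+1)%:R : F) = 'C(n, k)%:R * (n%:R - k%:R) / (k%:R + 1).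
Proof. by rewrite -!binom_nat binomSr natr1. Qed.

Lemma natr_bin_down n k :
  ('C(n, k)%:R : F) = 'C(n.+1, k)%:R * (n%:R + 1 - k%:R) / (n%:R + 1).
Proof.
rewrite -!binom_nat -[n.+1%:R]natr1 mul_binom_down [_ * binom _ _]mulrC.
by rewrite mulfK // natr1 pnatr_eq0.
Qed.

End Binomial.

Section Harmonic.
Variable F : fieldType.

Lemma Hx0 (z : F) : Hx 0 z = 0.
Proof. by rewrite /Hx big_geq. Qed.

Lemma HxS (z : F) k : Hx k.+1 z = Hx k z + (z + k.+1%:R)^-1.
Proof. by rewrite /Hx big_nat_recr. Qed.

End Harmonic.

Definition harmonic_binomial_sum (F : numFieldType) n (x : F) :=
  \sum_(0 <= k < n.+1)
     (-1) ^+ k * (binom (n%:R : F) k)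
       * (binom (2%:R * x + k%:R) k / binom (2%:R * x + (n + k)%:R) k)
       * Hx k x.

Definition harmonic_binomial_closed (F : numFieldType) n (x : F) :=
  4%:R ^+ (n.-1) * (binom (n%:R - 2%:R^-1 : F) n / binom (2%:R * x + (2 * n)%:R) n)
       * (Hx n x + Hn n - 2%:R * Hn (2 * n))
    - 4%:R ^+ (n.-1) / n%:R
       * (binom (x + n%:R - 2%:R^-1) n
          / (binom (2%:R * x + (2 * n)%:R) n * binom (x + n%:R) n)).

Section PositiveArgument.
Variables (F : numFieldType) (x : F).
Hypothesis x_gt0 : 0 < x.

Ltac pos := first [ exact: x_gt0 | exact: ltr01 | exact: ltr0Sn | by rewrite ltr0n
  | apply: mulr_gt0; pos | rewrite invr_gt0; pos | apply: exprn_gt0; pos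
  | apply: prodr_gt0 => ? _; pos
  | apply: ltr_wpDr; [nonneg | pos] | apply: ltr_pwDr; [pos | nonneg] ]
with nonneg := first [ exact: ler0n | exact: ler01 | exact: (ltW x_gt0)
  | apply: addr_ge0; nonneg | apply: mulr_ge0; nonneg ].
Ltac neq0 := apply: lt0r_neq0; pos.
Ltac field_sides := repeat (apply/andP; split); first [assumption | neq0].

Local Notation y := (2%:R * x).

Definition term n k := (-1) ^+ k * 'C(n, k)%:R * (rising (y + 1) k / rising (y + n%:R + 1) k).
Definition weight k := k%:R / (x + k%:R).

Definition tsum n := \sum_(k < n.+1) term n k.
Definition wsum n := \sum_(k < n.+1) term n k * weight k.
Definition hsum n := \sum_(k < n.+1) term n k * Hx k x.

Lemma term0 n : term n 0 = 1.
Proof. by rewrite /term bin0 !rising0 expr0 invr1 !mulr1. Qed.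

Lemma term_small n k : (n < k)%N -> term n k = 0.
Proof. by move=> nk; rewrite /term bin_small // mulr0 mul0r. Qed.

Lemma term11 : term 1 1 = - ((y + 1) / (y + 2%:R)).
Proof. by rewrite /term bin1 !risingS !rising0 expr1; field; field_sides. Qed.

Lemma rising_shift_y n k :
  rising (y + n.+1%:R + 1) k = rising (y + n%:R + 1) k * (y + n%:R + 1 + k%:R) / (y + n%:R + 1).
Proof.
have -> : y + n.+1%:R + 1 = y + n%:R + 1 + 1 by rewrite -[n.+1%:R]natr1 addrA.
by rewrite -risingS risingSl [_ * rising _ _]mulrC mulfK //; neq0.
Qed.

Definition tsum_ratio n :=
  2%:R * (2%:R * n%:R + 1) * (y + n%:R + 1) / ((y + 2%:R * n%:R + 1) * (y + 2%:R * n%:R + 2%:R)).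
Definition tsum_cert n k :=
  - (k%:R * (y + n%:R + 1) * ((2%:R * n%:R + 1) * (k%:R - 1) + n%:R * y))
  / (n%:R * (n%:R + 1) * (y + 2%:R * n%:R + 1) * (y + 2%:R * n%:R + 2%:R))
  * ((-1) ^+ k * 'C(n.+1, k)%:R * (rising (y + 1) k / rising (y + n%:R + 1) k)).

Lemma tsum_cert_eq n k : (0 < n)%N ->
  term n.+1 k - tsum_ratio n * term n k = tsum_cert n k.+1 - tsum_cert n k.
Proof.
move=> n_gt0; rewrite /tsum_cert /term /tsum_ratio (natr_bin_down n k) natr_binSr.
rewrite !risingS !rising_shift_y [(-1) ^+ k.+1]exprS -[n.+1%:R]natr1.
have n_neq0 : n%:R != 0 :> F by rewrite pnatr_eq0 -lt0n.
have r_neq0 : rising (y + n%:R + 1) k != 0 by neq0.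
field; field_sides.
Qed.

Definition wsum_ratio n := (n%:R + 1) * (y + n%:R + 1) / (x + n%:R + 1) ^+ 2.
Definition wsum_cert n k :=
  (y + n%:R + 1) / (2%:R * n%:R * (x + n%:R + 1) ^+ 2) * (k%:R * (1 - k%:R))
  * ((-1) ^+ k * 'C(n.+1, k)%:R * (rising (y + 1) k / rising (y + n%:R + 1) k)).

Lemma wsum_cert_eq n k : (0 < n)%N ->
  (term n.+1 k - wsum_ratio n * term n k) * weight k = wsum_cert n k.+1 - wsum_cert n k.
Proof.
move=> n_gt0; rewrite /wsum_cert /term /wsum_ratio /weight (natr_bin_down n k) natr_binSr.
rewrite !risingS !rising_shift_y [(-1) ^+ k.+1]exprS -[n.+1%:R]natr1.
have n_neq0 : n%:R != 0 :> F by rewrite pnatr_eq0 -lt0n.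
have r_neq0 : rising (y + n%:R + 1) k != 0 by neq0.
field; field_sides.
Qed.

Definition hsum_tcoef n := (y + 1) / (2%:R * (2%:R * n%:R + 1) * (x + n%:R + 1)).
Definition hsum_wcoef n := (x + 2%:R * n%:R + 1) * (x + n%:R + 1)
  / (n%:R * (n%:R + 1) * (y + 2%:R * n%:R + 1) * (y + 2%:R * n%:R + 2%:R)).

Definition divx_cert n k :=
  let N := n%:R in
  let w0 := (2%:R * N ^+ 2 - 2%:R * N - 1) / (8%:R * N ^+ 2)
    + (6%:R * N ^+ 3 - 4%:R * N - 1) / (4%:R * N ^+ 2 * (N + 1) * (2%:R * N + 1)) * x
    + x ^+ 2 / ((N + 1) * (2%:R * N + 1)) in
  let w1 := (4%:R * N + 1) / (8%:R * N * (N + 1))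
    + (6%:R * N ^+ 2 + 4%:R * N + 1) / (4%:R * N ^+ 2 * (N + 1) * (2%:R * N + 1)) * x in
  let w2 := (2%:R * N + 1) / (8%:R * N ^+ 2 * (N + 1)) in
  term n.+1 k * (k%:R * (w0 + w1 * k%:R + w2 * k%:R ^+ 2)) * 2%:R
  / ((x + N + 1) * (y + 2%:R * N + 1)).

Lemma divx_cert_eq n k : (0 < n)%N ->
  tsum_cert n k / (x + k%:R) = hsum_tcoef n * term n.+1 k
    + hsum_wcoef n * (term n.+1 k * weight k) + divx_cert n k.+1 - divx_cert n k.
Proof.
move=> n_gt0; rewrite /divx_cert /tsum_cert /term /hsum_tcoef /hsum_wcoef /weight /=.
rewrite !risingS !rising_shift_y natr_binSr [(-1) ^+ k.+1]exprS -[n.+1%:R]natr1.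
have n_neq0 : n%:R != 0 :> F by rewrite pnatr_eq0 -lt0n.
have r_neq0 : rising (y + n%:R + 1) k != 0 by neq0.
field; field_sides.
Qed.

Lemma tsum_rec n : (0 < n)%N -> tsum n.+1 = tsum_ratio n * tsum n.
Proof.
move=> n_gt0; rewrite /tsum -(sum_ord_recr0 (f := term n)) ?term_small //.
rewrite (sum_telescope_ratio (c := tsum_ratio n) (b := term n) (g := tsum_cert n)).
- by [].
- by move=> k; rewrite tsum_cert_eq.
- by rewrite /tsum_cert mulr0n !(mul0r, oppr0).
- by rewrite /tsum_cert bin_small // !(mul0r, mulr0).
Qed.

Lemma wsum_rec n : (0 < n)%N -> wsum n.+1 = wsum_ratio n * wsum n.
Proof.
move=> n_gt0; rewrite /wsum -(sum_ord_recr0 (f := fun k => term n k * weight k)).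
  rewrite (sum_telescope_ratio (c := wsum_ratio n) (a := fun k => term n.+1 k * weight k)
    (b := fun k => term n k * weight k) (g := wsum_cert n)).
  - by [].
  - by move=> k /=; rewrite [wsum_ratio n * _]mulrA -mulrBl wsum_cert_eq.
  - by rewrite /wsum_cert mulr0n !(mul0r, mulr0).
  - by rewrite /wsum_cert bin_small // !(mul0r, mulr0).
by rewrite term_small // mul0r.
Qed.

Lemma divx_cert1 n : (0 < n)%N -> divx_cert n 1 = - hsum_tcoef n.
Proof.
move=> n_gt0; have := divx_cert_eq 0 n_gt0.
rewrite /tsum_cert /divx_cert /weight term0 !(mul0r, mulr0, oppr0, subr0, addr0, mulr1).
by move/eqP; rewrite eq_sym addrC addr_eq0 => /eqP.
Qed.

Lemma hsum_rec n : (0 < n)%N -> hsum n.+1 =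
  tsum_ratio n * hsum n - hsum_tcoef n * tsum n.+1 - hsum_wcoef n * wsum n.+1.
Proof.
move=> n_gt0.
pose E k := hsum_tcoef n * term n.+1 k + hsum_wcoef n * (term n.+1 k * weight k).
(* Subtracting [E k] makes the certificate vanish at [k = 0]. *)
pose g k := tsum_cert n k * Hx k x - divx_cert n k.+1 - E k.
rewrite /hsum -(sum_ord_recr0 (f := fun k => term n k * Hx k x)).
  rewrite (sum_telescope_rec (c := tsum_ratio n) (a := fun k => term n.+1 k * Hx k x)
    (b := fun k => term n k * Hx k x) (e := fun k => - E k) (g := g)).
  - by rewrite sumrN big_split /= -!mulr_sumr opprD addrA.
  - move=> k /=; rewrite [tsum_ratio n * _]mulrA -mulrBl tsum_cert_eq // /g HxS.
    by rewrite [tsum_cert n k.+1 * _]mulrDr divx_cert_eq // /E; ring.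
  - by rewrite /g /E divx_cert1 // term0 /weight Hx0 !(mul0r, mulr0, mulr1, addr0); ring.
  - rewrite /g /E /tsum_cert /divx_cert /= bin_small // !term_small //.
    by rewrite !(mul0r, mulr0, subr0, addr0).
by rewrite term_small // mul0r.
Qed.

Definition closedA n :=
  4%:R ^+ n.-1 * (binom (n%:R - 2%:R^-1 : F) n / binom (y + (2 * n)%:R) n).
Definition closedB n := 4%:R ^+ n.-1 / n%:R
  * (binom (x + n%:R - 2%:R^-1) n / (binom (y + (2 * n)%:R) n * binom (x + n%:R) n)).

Lemma binomY_neq0 n : binom (y + (2 * n)%:R) n != 0.
Proof.
apply: binom_neq0 => i lt_in; rewrite -addrA -natrB; first neq0.
by rewrite (leq_trans (ltnW lt_in)) // leq_pmull.
Qed.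

Lemma binomX_neq0 n : binom (x + n%:R) n != 0.
Proof. by apply: binom_neq0 => i lt_in; rewrite -addrA -natrB ?(ltnW lt_in) //; neq0. Qed.

Lemma binomY_rec n : binom (y + (2 * n.+1)%:R) n.+1 = (y + (2 * n)%:R + 2%:R) / n.+1%:R
  * ((y + (2 * n)%:R + 1) * binom (y + (2 * n)%:R) n / (y + n%:R + 1)).
Proof.
have e : y + (2 * n)%:R + 1 - n%:R = y + n%:R + 1 by rewrite natrM; ring.
have e_neq0 : y + (2 * n)%:R + 1 - n%:R != 0 by rewrite e; neq0.
rewrite binomSl.
have -> : y + (2 * n.+1)%:R - 1 = y + (2 * n)%:R + 1 by rewrite mulnS natrD; ring.
rewrite -(mulfK e_neq0 (binom _ n)) mul_binom_down e mulnS natrD.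
by field; field_sides.
Qed.

Lemma closedA_rec n : (0 < n)%N -> closedA n.+1 = tsum_ratio n * closedA n.
Proof.
move=> n_gt0; have e4 : 4%:R ^+ n = 4%:R * 4%:R ^+ n.-1 :> F by rewrite -exprS prednK.
rewrite /closedA /tsum_ratio binomY_rec binomSl /= e4.
have -> : n.+1%:R - 2%:R^-1 - 1 = n%:R - 2%:R^-1 :> F by rewrite -natr1; ring.
move: (binomY_neq0 n); set bY := binom _ n => bY_neq0.
by rewrite natrM -natr1; field; field_sides.
Qed.

Lemma closedB_rec n : (0 < n)%N ->
  closedB n.+1 = n%:R * (y + n%:R + 1) / (x + n%:R + 1) ^+ 2 * closedB n.
Proof.
move=> n_gt0; have e4 : 4%:R ^+ n = 4%:R * 4%:R ^+ n.-1 :> F by rewrite -exprS prednK.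
rewrite /closedB binomY_rec !binomSl /= e4.
have -> : x + n.+1%:R - 2%:R^-1 - 1 = x + n%:R - 2%:R^-1 by rewrite -natr1; ring.
have -> : x + n.+1%:R - 1 = x + n%:R by rewrite -natr1; ring.
move: (binomY_neq0 n); set bY := binom _ n => bY_neq0.
move: (binomX_neq0 n); set bX := binom _ n => bX_neq0.
have n_neq0 : n%:R != 0 :> F by rewrite pnatr_eq0 -lt0n.
by rewrite natrM -!natr1; field; field_sides.
Qed.

Lemma tsum_closed n : (0 < n)%N -> tsum n = 2%:R * closedA n.
Proof.
elim: n => [//|[|n] IH] _.
  rewrite /tsum /closedA !big_ord_recr big_ord0 /= add0r term0 term11 !binom1.
  by rewrite expr0 mul1r; field; field_sides.
by rewrite tsum_rec // IH // (@closedA_rec n.+1) // mulrCA.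
Qed.

Lemma wsum_closed n : (0 < n)%N -> wsum n = - (2%:R * n%:R * closedB n).
Proof.
elim: n => [//|[|n] IH] _.
  rewrite /wsum /closedB /weight !big_ord_recr big_ord0 /= add0r term0 term11 !binom1.
  by rewrite expr0 mul1r; field; field_sides.
rewrite wsum_rec // IH // (@closedB_rec n.+1) // /wsum_ratio -[n.+2%:R]natr1 -[n.+1%:R]natr1.
by field; field_sides.
Qed.

Lemma hsum_closed n : (0 < n)%N ->
  hsum n = closedA n * (Hx n x + Hn n - 2%:R * Hn (2 * n)) - closedB n.
Proof.
rewrite /Hn; elim: n => [//|[|n] IH] _.
  rewrite /hsum /closedA /closedB !big_ord_recr big_ord0 /= add0r term0 term11 !binom1.
  rewrite muln1 !HxS !Hx0 !add0r expr0 mul1r.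
  by field; field_sides.
rewrite hsum_rec // IH // tsum_closed // wsum_closed //.
rewrite (@closedA_rec n.+1) // (@closedB_rec n.+1) //.
have -> : (2 * n.+2 = (2 * n.+1).+2)%N by rewrite !mulnS.
rewrite (HxS x n.+1) (HxS 0 n.+1) (HxS 0 (2 * n.+1).+1) (HxS 0 (2 * n.+1)).
rewrite /hsum_tcoef /hsum_wcoef /tsum_ratio.
by field; field_sides.
Qed.

Lemma harmonic_binomial_sum_pos n : (0 < n)%N ->
  harmonic_binomial_sum n x = harmonic_binomial_closed n x.
Proof.
move=> n_gt0; rewrite -[RHS]/(closedA n * _ - closedB n) -hsum_closed //.
rewrite /harmonic_binomial_sum big_mkord; apply: eq_bigr => k _.
rewrite binom_nat binom_rising natrD addrA binom_rising /term.
have r_neq0 : rising (y + n%:R + 1) k != 0 by neq0.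
by field; rewrite natr_fact_neq0 r_neq0.
Qed.

End PositiveArgument.

Definition admissible (F : numFieldType) n (z : F) :=
  [/\ forall j : nat, (1 <= j <= n)%N -> z + j%:R != 0,
      forall k : nat, (k <= n)%N -> binom (2%:R * z + (n + k)%:R) k != 0,
      binom (2%:R * z + (2 * n)%:R) n != 0 &
      binom (z + n%:R) n != 0].

Lemma admissible_nat {F : numFieldType} n N : admissible n (N.+1%:R : F).
Proof.
have e m : 2%:R * (N.+1%:R : F) + m%:R = (2 * N.+1 + m)%:R by rewrite natrD natrM.
split.
- by move=> j _; rewrite -natrD pnatr_eq0 addSn.
- by move=> k _; rewrite e binom_nat_neq0 // addnA leq_addl.
- by rewrite e binom_nat_neq0 // (leq_trans (leq_pmull n (ltn0Sn 1))) ?leq_addl.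
- by rewrite -natrD binom_nat_neq0 // leq_addl.
Qed.

Ltac rational_step := first [ exact: rational_const | exact: rational_id
  | apply: rational_binom | apply: rational_add | apply: rational_opp
  | apply: rational_mul | apply: rational_inv ].

Lemma rational_harmonic_defect {F : numFieldType} n : rational_on (admissible n)
  (fun z : F => harmonic_binomial_sum n z - harmonic_binomial_closed n z).
Proof.
have rHx k : (k <= n)%N -> rational_on (admissible n) (Hx k).
  move=> kn; apply: rational_Hx => z [z_neq0 _ _ _] j /andP[j_gt0 jk].
  by rewrite z_neq0 // j_gt0 (leq_trans jk kn).
rewrite /harmonic_binomial_sum /harmonic_binomial_closed.
apply: rational_add; first apply: rational_sum => k.
  rewrite mem_index_iota ltnS => /andP[_ kn] _.
all: repeat rational_step.
all: first [exact: rHx | move=> z [_ B1 B2 B3]; first [done | exact: B1 | exact: mulf_neq0]].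
Qed.

Unset Implicit Arguments.
Theorem theorem3 (R : realType) (n : nat) (x : R[i])
  (hn : (0 < n)%N)
  (hH : forall j : nat, (1 <= j <= n)%N -> x + j%:R != 0)
  (hB1 : forall k : nat, (k <= n)%N -> binom (2%:R * x + (n + k)%:R) k != 0)
  (hB2 : binom (2%:R * x + (2 * n)%:R) n != 0)
  (hB3 : binom (x + n%:R) n != 0) :
  \sum_(0 <= k < n.+1)
     (-1) ^+ k * (binom (n%:R : R[i]) k)
       * (binom (2%:R * x + k%:R) k / binom (2%:R * x + (n + k)%:R) k)
       * Hx k x
  = 4%:R ^+ (n.-1) * (binom (n%:R - 2%:R^-1 : R[i]) n / binom (2%:R * x + (2 * n)%:R) n)
       * (Hx n x + Hn n - 2%:R * Hn (2 * n))
    - 4%:R ^+ (n.-1) / n%:R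
       * (binom (x + n%:R - 2%:R^-1) n
          / (binom (2%:R * x + (2 * n)%:R) n * binom (x + n%:R) n)).
Proof.
have nat_inj : injective (fun N => N.+1%:R : R[i]).
  by move=> a b /eqP; rewrite eqr_nat => /eqP[].
have defect0 N : harmonic_binomial_sum n (N.+1%:R : R[i])
    - harmonic_binomial_closed n N.+1%:R = 0.
  by rewrite harmonic_binomial_sum_pos ?ltr0Sn ?subrr.
have Dx : admissible n x by split.
have := rational_on_eq0 (rational_harmonic_defect n) nat_inj (admissible_nat n) defect0 Dx.
by move/eqP; rewrite subr_eq0 => /eqP.
Qed.
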